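(* For $\kappa$ countably infinite, the lattice $S$ is a countable bounded modular lattice.
   Context: $\mathcal{F}(\kappa)$ is the Boolean lattice of subsets $X\subseteq\kappa$ that are finite or cofinite. For sets $A,B,C$, $\mu(A,B,C)=(A\cap B)\cup(A\cap C)\cup(B\cap C)$. A triple is balanced if $A\cap B=A\cap C=B\cap C$. $S$ is the set of balanced triples $(A,B,C)\in\mathcal{F}(\kappa)^3$ with $C\setminus\mu(A,B,C)$ finite, ordered componentwise; it is a lattice with componentwise intersection as meet and join $(A,B,C)\vee(A',B',C')=(U_1\cup m,U_2\cup m,U_3\cup m)$ where $U_1=A\cup A'$, $U_2=B\cup B'$, $U_3=C\cup C'$, $m=\mu(U_1,U_2,U_3)$. *)

From mathcomp Require Import all_boot.
From mathcomp Require Import boolp classical_sets cardinality.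
Set Implicit Arguments. Unset Strict Implicit. Unset Printing Implicit Defensive.
Local Open Scope classical_set_scope.

(* F(kappa): finite or cofinite subsets of kappa (here kappa is the type T). *)
Definition finCof {T : Type} (X : set T) : Prop :=
  finite_set X \/ finite_set (~` X).

Definition mu {T : Type} (A B C : set T) : set T :=
  (A `&` B) `|` (A `&` C) `|` (B `&` C).

Definition balanced {T : Type} (A B C : set T) : Prop :=
  A `&` B = A `&` C /\ A `&` C = B `&` C.

Definition triple (T : Type) := (set T * set T * set T)%type.
Definition t1 {T} (t : triple T) : set T := t.1.1.
Definition t2 {T} (t : triple T) : set T := t.1.2.
Definition t3 {T} (t : triple T) : set T := t.2.

Definition S (T : Type) : set (triple T) :=
  [set t | [/\ finCof (t1 t), finCof (t2 t), finCof (t3 t),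
              balanced (t1 t) (t2 t) (t3 t) &
              finite_set (t3 t `\` mu (t1 t) (t2 t) (t3 t))]].

Definition leT {T} (t u : triple T) : Prop :=
  [/\ t1 t `<=` t1 u, t2 t `<=` t2 u & t3 t `<=` t3 u].

Definition meetT {T} (t u : triple T) : triple T :=
  (t1 t `&` t1 u, t2 t `&` t2 u, t3 t `&` t3 u).

Definition joinT {T} (t u : triple T) : triple T :=
  let U1 := t1 t `|` t1 u in
  let U2 := t2 t `|` t2 u in
  let U3 := t3 t `|` t3 u in
  let m := mu U1 U2 U3 in
  (U1 `|` m, U2 `|` m, U3 `|` m).
Arguments S T : clear implicits.

(** If two of [A p], [B p], [C p] hold for a balanced triple, so does the
    third; hence at each point a balanced triple takes one of five values
    (empty, one coordinate, all three), and [meetT] and [joinT] act pointwise as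
    the meet and join of the five-element modular lattice M3.  Modularity of [S]
    is therefore a pointwise Boolean identity.  [S] is closed under [meetT]
    and [joinT] because the defect [C `\` mu A B C] of a meet or join lies in
    the union of the defects of its arguments: for meets since the median of a
    balanced triple is its pairwise intersection, for joins since [mu] is
    monotone.  Countability holds since a finite-or-cofinite subset of a
    countable set is coded by a finite set and a bit. *)

From mathcomp Require Import all_boot.
From mathcomp Require Import boolp classical_sets cardinality.
Local Open Scope classical_set_scope.
Local Open Scope card_scope.

Lemma balanced_at {T : Type} {A B C : set T} (p : T) : balanced A B C ->
  (A p /\ B p <-> A p /\ C p) /\ (A p /\ C p <-> B p /\ C p).
Proof.
case=> E1 E2; split.
  by move: (congr1 (fun X => X p) E1) => /= ->.
by move: (congr1 (fun X => X p) E2) => /= ->.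
Qed.

(* Proves a set inclusion or equation at a generic point: the hypotheses are
   specialised to that point, each membership is turned into a boolean, and
   the goal is checked by computation for every truth assignment. *)
Ltac set_bool :=
  let p := fresh "p" in
  first [apply/funext => p; rewrite propeqE | move=> p];
  repeat match goal with
  | H : balanced _ _ _ |- _ => move: (balanced_at p H); clear H
  | H : _ `<=` _ |- _ => move: (H p); clear H
  end;
  rewrite /mu /setU /setI /setD /setC /iff /=;
  apply: asboolW;
  rewrite !(asbool_imply, asbool_and, asbool_or, asbool_neg);
  repeat match goal with
  | |- context [`[< ?X p >]] => is_var X; case: `[< X p >]
  end.

Section Median.
Context {T : Type}.
Implicit Types A B C D E F : set T.

Lemma balanced_muE A B C : balanced A B C -> mu A B C = A `&` B.
Proof. by case=> E1 E2; rewrite /mu -E2 -E1 !setUid. Qed.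

Lemma mu_sub1 {A B C} : balanced A B C -> mu A B C `<=` A.
Proof. by move/balanced_muE->; apply: subIsetl. Qed.

Lemma mu_sub2 {A B C} : balanced A B C -> mu A B C `<=` B.
Proof. by move/balanced_muE->; apply: subIsetr. Qed.

Lemma mu_sub3 {A B C} : balanced A B C -> mu A B C `<=` C.
Proof.
by move=> bABC; rewrite balanced_muE //; case: bABC => -> _; apply: subIsetr.
Qed.

Lemma subset_mu A B C D E F :
  A `<=` D -> B `<=` E -> C `<=` F -> mu A B C `<=` mu D E F.
Proof. by move=> AD BE CF; set_bool. Qed.

Lemma balancedI A B C D E F : balanced A B C -> balanced D E F ->
  balanced (A `&` D) (B `&` E) (C `&` F).
Proof.
case=> E1 E2 [E3 E4]; split.
  by rewrite setIACA E1 E3 setIACA.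
by rewrite setIACA E2 E4 setIACA.
Qed.

Lemma balanced_setU_mu A B C :
  balanced (A `|` mu A B C) (B `|` mu A B C) (C `|` mu A B C).
Proof. by split; set_bool. Qed.

Lemma mu_setU_mu A B C :
  mu (A `|` mu A B C) (B `|` mu A B C) (C `|` mu A B C) = mu A B C.
Proof. by set_bool. Qed.

Lemma setDmuI {A B C D E F} : balanced A B C -> balanced D E F ->
  (C `&` F) `\` mu (A `&` D) (B `&` E) (C `&` F) `<=`
  (C `\` mu A B C) `|` (F `\` mu D E F).
Proof.
move=> bABC bDEF; rewrite !balanced_muE //; last exact: balancedI.
rewrite setIACA setDIr.
by apply: setUSS; apply: setSD; [apply: subIsetl | apply: subIsetr].
Qed.

Lemma setDmuU A B C D E F :
  (C `|` F) `\` mu (A `|` D) (B `|` E) (C `|` F) `<=`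
  (C `\` mu A B C) `|` (F `\` mu D E F).
Proof.
rewrite setDUl; apply: setUSS; apply: setDS; apply: subset_mu;
  by [apply: subsetUl | apply: subsetUr].
Qed.

End Median.

Section FiniteCofinite.
Context {T : Type}.
Implicit Types X Y Z : set T.

Lemma finCof0 : finCof (@set0 T).
Proof. by left; apply: finite_set0. Qed.

Lemma finCofT : finCof (@setT T).
Proof. by right; rewrite setCT; apply: finite_set0. Qed.

Lemma finCofI X Y : finCof X -> finCof Y -> finCof (X `&` Y).
Proof.
case=> [fX|cX] [fY|cY].
- by left; apply: sub_finite_set fX; apply: subIsetl.
- by left; apply: sub_finite_set fX; apply: subIsetl.
- by left; apply: sub_finite_set fY; apply: subIsetr.
- by right; rewrite setCI finite_setU.
Qed.

Lemma finCofU X Y : finCof X -> finCof Y -> finCof (X `|` Y).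
Proof.
case=> [fX|cX] [fY|cY].
- by left; rewrite finite_setU.
- by right; apply: sub_finite_set cY => x /= nXY Yx; apply: nXY; right.
- by right; apply: sub_finite_set cX => x /= nXY Xx; apply: nXY; left.
- by right; apply: sub_finite_set cX => x /= nXY Xx; apply: nXY; left.
Qed.

Lemma finCof_mu X Y Z : finCof X -> finCof Y -> finCof Z -> finCof (mu X Y Z).
Proof. by move=> fX fY fZ; do !apply: finCofU; apply: finCofI. Qed.

Lemma countable_finCof : countable [set: T] -> countable (@finCof T).
Proof.
move=> cT.
have cfin : countable [set X : set T | finite_set X].
  apply: sub_countable (countable_finite_subset cT).
  by apply: subset_card_le => X fX; split.
pose code (bX : bool * set T) := if bX.1 then bX.2 else ~` bX.2.
apply: (sub_countable (B := code @` ([set: bool] `*` [set X | finite_set X]))).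
  apply: subset_card_le => X [fX|cX]; first by exists (true, X).
  by exists (false, ~` X) => //; rewrite /code /= setCK.
by apply: card_le_trans (card_image_le _ _) _; apply: countableX.
Qed.

End FiniteCofinite.

Arguments t1 {T} t /.
Arguments t2 {T} t /.
Arguments t3 {T} t /.
Arguments meetT {T} t u /.
Arguments joinT {T} t u /.

Section TripleLattice.
Context {T : Type}.
Implicit Types t u v : triple T.

Lemma S_meetT t u : S T t -> S T u -> S T (meetT t u).
Proof.
case: t u => [[A B] C] [[D E] F] [/= fA fB fC bABC iABC] [/= fD fE fF bDEF iDEF].
split=> /=; [exact: finCofI.. | exact: balancedI |].
apply: sub_finite_set (setDmuI bABC bDEF) _.
by rewrite finite_setU.
Qed.

Lemma leT_meetTl t u : leT (meetT t u) t.
Proof. by split; apply: subIsetl. Qed.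

Lemma leT_meetTr t u : leT (meetT t u) u.
Proof. by split; apply: subIsetr. Qed.

Lemma leT_meetT v t u : leT v t -> leT v u -> leT v (meetT t u).
Proof. by case=> ? ? ? [? ? ?]; split; rewrite /= subsetI. Qed.

Lemma S_joinT t u : S T t -> S T u -> S T (joinT t u).
Proof.
case: t u => [[A B] C] [[D E] F] [/= fA fB fC _ iABC] [/= fD fE fF _ iDEF].
have fm : finCof (mu (A `|` D) (B `|` E) (C `|` F)).
  by apply: finCof_mu; apply: finCofU.
split=> /=; [by apply: finCofU => //; apply: finCofU.. |
  exact: balanced_setU_mu |].
rewrite mu_setU_mu setDUl setDv setU0.
apply: sub_finite_set (setDmuU A B C D E F) _.
by rewrite finite_setU.
Qed.

Lemma leT_joinTl t u : leT t (joinT t u).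
Proof. by split=> x tx; left; left. Qed.

Lemma leT_joinTr t u : leT u (joinT t u).
Proof. by split=> x ux; left; right. Qed.

Lemma leT_joinT t u v : S T v -> leT t v -> leT u v -> leT (joinT t u) v.
Proof.
case: v => [[G H] K] [/= _ _ _ bGHK _] [/= tG tH tK] [/= uG uH uK].
have muGHK : mu (t1 t `|` t1 u) (t2 t `|` t2 u) (t3 t `|` t3 u) `<=` mu G H K.
  by apply: subset_mu; rewrite subUset.
split=> /=; (rewrite subUset; split; first by rewrite subUset).
- exact: subset_trans muGHK (mu_sub1 bGHK).
- exact: subset_trans muGHK (mu_sub2 bGHK).
- exact: subset_trans muGHK (mu_sub3 bGHK).
Qed.

Lemma countable_S : countable [set: T] -> countable (S T).
Proof.
move=> /countable_finCof cF.
apply: (sub_countable (B := (@finCof T `*` @finCof T) `*` @finCof T)).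
  by apply: subset_card_le => -[[A B] C] [fA fB fC _ _].
by do !apply: countableX.
Qed.

Lemma S_bot : S T (set0, set0, set0).
Proof.
split=> /=; [exact: finCof0.. | by split; rewrite !set0I |].
by rewrite set0D; apply: finite_set0.
Qed.

Lemma S_top : S T (setT, setT, setT).
Proof.
split=> /=; [exact: finCofT.. | by split; rewrite !setIT |].
by rewrite /mu !setIT !setUid setDv; apply: finite_set0.
Qed.

Lemma leT_bot t : leT (set0, set0, set0) t.
Proof. by split; apply: sub0set. Qed.

Lemma leT_top t : leT t (setT, setT, setT).
Proof. by split; apply: subsetT. Qed.

Lemma joinT_meetT_modular x y z : S T x -> S T y -> S T z -> leT x z ->
  joinT x (meetT y z) = meetT (joinT x y) z.
Proof.
case: x y z => [[A B] C] [[D E] F] [[G H] K] [_ _ _ bABC _] [_ _ _ bDEF _]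
  [_ _ _ bGHK _] [/= AG BH CK].
by congr (_, _, _); set_bool.
Qed.

End TripleLattice.

Theorem corollary3p4 (T : Type) (hT : [set: T] #= [set: nat]) :
  (* S is a lattice under the componentwise order, with meetT / joinT
     as greatest lower / least upper bounds *)
  (forall t u, S T t -> S T u ->
     [/\ S T (meetT t u), leT (meetT t u) t, leT (meetT t u) u &
         forall v, S T v -> leT v t -> leT v u -> leT v (meetT t u)]) /\
  (forall t u, S T t -> S T u ->
     [/\ S T (joinT t u), leT t (joinT t u), leT u (joinT t u) &
         forall v, S T v -> leT t v -> leT u v -> leT (joinT t u) v]) /\
  (* countable *)
  countable (S T) /\
  (* bounded *)
  (exists bot top, [/\ S T bot, S T top &
     forall t, S T t -> leT bot t /\ leT t top]) /\
  (* modular *)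
  (forall x y z, S T x -> S T y -> S T z -> leT x z ->
     joinT x (meetT y z) = meetT (joinT x y) z).
Proof.
have cT : countable [set: T] by move: hT; rewrite card_eq_le => /andP[].
split.
  move=> t u St Su; split; [exact: S_meetT | exact: leT_meetTl |
    exact: leT_meetTr | by move=> v _; apply: leT_meetT].
split.
  move=> t u St Su; split; [exact: S_joinT | exact: leT_joinTl |
    exact: leT_joinTr | by move=> v Sv; apply: leT_joinT].
split; first exact: countable_S.
split; last exact: joinT_meetT_modular.
exists (set0, set0, set0), (setT, setT, setT); split.
- exact: S_bot.
- exact: S_top.
- by move=> t _; split; [apply: leT_bot | apply: leT_top].
Qed.
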